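(* Let $F$ be a CNF formula and let $\pi$ be a derivation from $F$. Then $F \vDash \mathrm{ctx}(\pi).\mathrm{acc}(F,\pi)$, where for a program $\varepsilon$ and a CNF formula $G$ we write $\varepsilon.G=\{\varepsilon.C : C\in G\}$ and $F$ is identified with the dynamic formula $\{[\,].C : C\in F\}$ ($[\,]$ the empty program).
   Context: Variables, assignments, literals ($x,\neg x,\top,\bot$ with complements $\overline{x}=\neg x$, $\overline{\neg x}=x$, $\overline\top=\bot$, $\overline\bot=\top$), substitutions (maps $\sigma$ on literals with $\sigma(\top)=\top$, $\sigma(\overline l)=\overline{\sigma(l)}$; finite if $\sigma(x)=x$ for all but finitely many variables), and $I\circ\sigma$ (the assignment with $(I\circ\sigma)(x)=1$ iff $I\vDash\sigma(x)$) are as usual. A clause $l_1\vee\dots\vee l_n$ is satisfied iff some $l_i$ is; a cube $l_1\wedge\dots\wedge l_n$ iff all are. Negations: $\overline{l_1\vee\dots\vee l_n}=\overline{l_1}\wedge\dots\wedge\overline{l_n}$ and $\overline{l_1\wedge\dots\wedge l_n}=\overline{l_1}\vee\dots\vee\overline{l_n}$; reducts $C[\sigma]$ apply $\sigma$ to each literal, and $F[\sigma]=\{C[\sigma]:C\in F\}$. A CNF formula is a finite set of clauses and cubes; a literal $l$ as a constraint is the unit clause $l$. Conflict detection $\vdash_\bot F$ is unit propagation: let $U(F)$ be the least set of literals containing $\top$, all literals of cubes in $F$, and such that for every clause $l_1\vee\dots\vee l_n\in F$ and $i$, if $\overline{l_j}\in U(F)$ for all $j\ne i$ then $l_i\in U(F)$;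 then $\vdash_\bot F$ iff $U(F)$ contains $\bot$, or contains $x$ and $\neg x$ for some variable $x$, or some clause of $F$ has all complements of its literals in $U(F)$. A clause $C$ is RUP over $F$ if $\vdash_\bot F\cup\{\overline C\}$; SR over $F$ upon $\sigma$ if $\vdash_\bot\{\overline{C[\sigma]}\}$ and $\vdash_\bot F\cup\{\overline C,\overline{D[\sigma]}\}$ for all $D\in F$; WSR over $F$ upon $\sigma$ modulo a CNF formula $G$ if $\vdash_\bot F\cup\{\overline C,\overline{D[\sigma]}\}$ for all $D\in(F\setminus G)\cup\{C\}$. Instructions are $\mathrm{del}(C)$, $\mathrm{rup}(C)$, $\mathrm{sr}(C,\sigma)$, $\mathrm{wsr}(C,\sigma,G)$ ($C$ clause, $\sigma$ finite substitution, $G$ CNF formula). The accumulated formula: $\mathrm{acc}(F,[\,])=F$, $\mathrm{acc}(F,\pi\,\mathrm{del}(C))=\mathrm{acc}(F,\pi)\setminus\{C\}$, $\mathrm{acc}(F,\pi\,\mathrm{rup}(C))=\mathrm{acc}(F,\pi\,\mathrm{sr}(C,\sigma))=\mathrm{acc}(F,\pi)\cup\{C\}$, $\mathrm{acc}(F,\pi\,\mathrm{wsr}(C,\sigma,G))=(\mathrm{acc}(F,\pi)\setminus G)\cup\{C\}$. Derivations from $F$: the empty list is one; if $\pi$ is one then so is $\pi\,\mathrm{del}(C)$, and so are $\pi\,\mathrm{rup}(C)$, $\pi\,\mathrm{sr}(C,\sigma)$, $\pi\,\mathrm{wsr}(C,\sigma,G)$ provided $C$ is respectively RUP over, SR over upon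 $\sigma$, or WSR over upon $\sigma$ modulo $G$, the formula $\mathrm{acc}(F,\pi)$. Programs: program items are $\langle\sigma\rangle$ ($I\otimes J\vDash\langle\sigma\rangle$ iff $J=I\circ\sigma$), tests $T?$ ($I\otimes J\vDash T?$ iff $I\vDash T$, $J=I$), choices $\varepsilon_1\sqcup\varepsilon_2$ (either), and branches $\mathrm{if}\ T\ \mathrm{then}\ \varepsilon_1\parallel\varepsilon_0$ (behave as $\varepsilon_1$ if $I\vDash T$, as $\varepsilon_0$ otherwise); a program is a list of items with sequential-composition semantics (the empty program $[\,]$ relates $I$ to $I$ only). We write $\mathrm{if}\ T\ \mathrm{then}\ \varepsilon$ for $\mathrm{if}\ T\ \mathrm{then}\ \varepsilon\parallel[\,]$. A dynamic constraint $\varepsilon.C$ is satisfied by $I$ iff $J\vDash C$ for all $J$ with $I\otimes J\vDash\varepsilon$; dynamic formulas are finite sets of these, interpreted conjunctively. The context of an instruction list: $\mathrm{ctx}([\,])=[\,]$, $\mathrm{ctx}(\pi\,\mathrm{del}(C))=\mathrm{ctx}(\pi\,\mathrm{rup}(C))=\mathrm{ctx}(\pi)$, $\mathrm{ctx}(\pi\,\mathrm{sr}(C,\sigma))=\mathrm{ctx}(\pi\,\mathrm{wsr}(C,\sigma,G))=\mathrm{ctx}(\pi)\,(\mathrm{if}\ \overline C\ \mathrm{then}\ \langle\sigma\rangle)$. *)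

From Stdlib Require Import List.
Import ListNotations.

Definition var := nat.
Definition assignment := var -> bool.

Inductive lit : Type :=
| Pos (x : var)
| Neg (x : var)
| LTop
| LBot.

Definition compl (l : lit) : lit :=
  match l with
  | Pos x => Neg x
  | Neg x => Pos x
  | LTop => LBot
  | LBot => LTop
  end.

Definition lsat (I : assignment) (l : lit) : Prop :=
  match l with
  | Pos x => I x = true
  | Neg x => I x = false
  | LTop => True
  | LBot => False
  end.

Definition subst := var -> lit.

Definition app_sub (s : subst) (l : lit) : lit :=
  match l with
  | Pos x => s x
  | Neg x => compl (s x)
  | LTop => LTop
  | LBot => LBot
  end.

Definition finite_sub (s : subst) : Prop :=
  exists n : nat, forall x : var, n <= x -> s x = Pos x.

Definition comp_asg (I : assignment) (s : subst) (J : assignment) : Prop :=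
  forall x : var, J x = true <-> lsat I (s x).

Inductive constr : Type :=
| Clause (ls : list lit)
| Cube (ls : list lit).

Definition csat (I : assignment) (c : constr) : Prop :=
  match c with
  | Clause ls => exists l, In l ls /\ lsat I l
  | Cube ls => forall l, In l ls -> lsat I l
  end.

Definition neg (c : constr) : constr :=
  match c with
  | Clause ls => Cube (map compl ls)
  | Cube ls => Clause (map compl ls)
  end.

Definition reduct (c : constr) (s : subst) : constr :=
  match c with
  | Clause ls => Clause (map (app_sub s) ls)
  | Cube ls => Cube (map (app_sub s) ls)
  end.

(* Sets of constraints (used for accumulated formulas); CNF formulas given
   explicitly are finite lists. *)
Definition cset := constr -> Prop.
Definition of_list (F : list constr) : cset := fun c => In c F.
Definition add (S : cset) (c : constr) : cset := fun d => S d \/ d = c.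
Definition remove (S : cset) (c : constr) : cset := fun d => S d /\ d <> c.
Definition minus (S : cset) (G : list constr) : cset := fun d => S d /\ ~ In d G.
Definition single (c : constr) : cset := fun d => d = c.

Inductive UP (F : cset) : lit -> Prop :=
| up_top : UP F LTop
| up_cube : forall ls l, F (Cube ls) -> In l ls -> UP F l
| up_clause : forall pre l post,
    F (Clause (pre ++ l :: post)) ->
    (forall m, In m (pre ++ post) -> UP F (compl m)) ->
    UP F l.

Definition conflict (F : cset) : Prop :=
  UP F LBot \/
  (exists x, UP F (Pos x) /\ UP F (Neg x)) \/
  (exists ls, F (Clause ls) /\ forall l, In l ls -> UP F (compl l)).

Definition is_rup (F : cset) (C : list lit) : Prop :=
  conflict (add F (neg (Clause C))).

Definition is_sr (F : cset) (C : list lit) (s : subst) : Prop :=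
  conflict (single (neg (reduct (Clause C) s))) /\
  forall D, F D -> conflict (add (add F (neg (Clause C))) (neg (reduct D s))).

Definition is_wsr (F : cset) (C : list lit) (s : subst) (G : list constr) : Prop :=
  forall D, add (minus F G) (Clause C) D ->
    conflict (add (add F (neg (Clause C))) (neg (reduct D s))).

Inductive instr : Type :=
| Del (C : list lit)
| Rup (C : list lit)
| Sr (C : list lit) (s : subst)
| Wsr (C : list lit) (s : subst) (G : list constr).

Definition acc_step (S : cset) (i : instr) : cset :=
  match i with
  | Del C => remove S (Clause C)
  | Rup C => add S (Clause C)
  | Sr C _ => add S (Clause C)
  | Wsr C _ G => add (minus S G) (Clause C)
  end.

Definition acc (F : list constr) (p : list instr) : cset :=
  fold_left acc_step p (of_list F).

Inductive item : Type :=
| ISub (s : subst)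
| ITest (T : constr)
| IChoice (e1 e2 : list item)
| IIf (T : constr) (e1 e0 : list item).

Definition program := list item.

Inductive isem : item -> assignment -> assignment -> Prop :=
| isem_sub : forall s I J, comp_asg I s J -> isem (ISub s) I J
| isem_test : forall T I J, csat I T -> (forall x, J x = I x) -> isem (ITest T) I J
| isem_choice_l : forall e1 e2 I J, psem e1 I J -> isem (IChoice e1 e2) I J
| isem_choice_r : forall e1 e2 I J, psem e2 I J -> isem (IChoice e1 e2) I J
| isem_if_t : forall T e1 e0 I J, csat I T -> psem e1 I J -> isem (IIf T e1 e0) I J
| isem_if_f : forall T e1 e0 I J, ~ csat I T -> psem e0 I J -> isem (IIf T e1 e0) I J
with psem : program -> assignment -> assignment -> Prop :=
| psem_nil : forall I J, (forall x, J x = I x) -> psem [] I J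
| psem_cons : forall it e I K J, isem it I K -> psem e K J -> psem (it :: e) I J.

Definition dsat (I : assignment) (e : program) (C : constr) : Prop :=
  forall J, psem e I J -> csat J C.

Definition ctx_step (e : program) (i : instr) : program :=
  match i with
  | Del _ | Rup _ => e
  | Sr C s | Wsr C s _ => e ++ [IIf (neg (Clause C)) [ISub s] []]
  end.

Definition ctx (p : list instr) : program := fold_left ctx_step p [].

Inductive derivation (F : list constr) : list instr -> Prop :=
| der_nil : derivation F []
| der_del : forall p C, derivation F p -> derivation F (p ++ [Del C])
| der_rup : forall p C, derivation F p -> is_rup (acc F p) C ->
    derivation F (p ++ [Rup C])
| der_sr : forall p C s, derivation F p -> finite_sub s ->
    is_sr (acc F p) C s -> derivation F (p ++ [Sr C s])
| der_wsr : forall p C s G, derivation F p -> finite_sub s ->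
    is_wsr (acc F p) C s G -> derivation F (p ++ [Wsr C s G]).

Definition dyn_entails (P Q : program -> constr -> Prop) : Prop :=
  forall I : assignment,
    (forall e C, P e C -> dsat I e C) -> (forall e C, Q e C -> dsat I e C).

Definition static (F : list constr) : program -> constr -> Prop :=
  fun e C => e = [] /\ In C F.
Definition dynof (e : program) (G : cset) : program -> constr -> Prop :=
  fun e' C => e' = e /\ G C.

(* Invariant: every assignment obtained by running ctx(π) from a model of F
   satisfies acc(F, π).  Unit propagation is sound, so a conflict in
   S ∪ {¬c} forces every model of S to satisfy c; this settles
   RUP steps.  An SR or WSR step adding C appends the guard
   "if ¬C then <σ>".  If the current assignment K satisfies C the guard does
   nothing and C holds.  Otherwise the new assignment is K∘σ, and the
   redundancy conditions say exactly that K ⊨ D[σ], i.e. K∘σ ⊨ D, for every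
   constraint D that is kept. *)

From Stdlib Require Import List Classical FunctionalExtensionality.
Import ListNotations.

Set Implicit Arguments.
Unset Strict Implicit.

Definition models (I : assignment) (S : cset) : Prop :=
  forall c, S c -> csat I c.

Lemma models_add I S c : models I S -> csat I c -> models I (add S c).
Proof. now intros HS Hc d [Hd | ->]; auto. Qed.

Lemma lsat_compl I l : lsat I (compl l) <-> ~ lsat I l.
Proof. destruct l; simpl; try tauto; destruct (I x); split; congruence. Qed.

Lemma csat_neg I c : csat I (neg c) <-> ~ csat I c.
Proof.
  destruct c as [ls | ls]; simpl; split.
  - intros H [l [Hl Hsat]].
    exact (proj1 (lsat_compl I l) (H _ (in_map _ _ _ Hl)) Hsat).
  - intros H l' Hl'. apply in_map_iff in Hl' as [l [<- Hl]].
    apply lsat_compl; intro Hsat; eauto.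
  - intros [l' [Hl' Hsat]] H. apply in_map_iff in Hl' as [l [<- Hl]].
    exact (proj1 (lsat_compl I l) Hsat (H l Hl)).
  - intros H. apply NNPP; intro Hnot. apply H; intros l Hl.
    apply NNPP; intro Hnl. apply Hnot.
    exists (compl l); split; [apply in_map | apply lsat_compl]; auto.
Qed.

Lemma lsat_app_sub I s J l :
  comp_asg I s J -> lsat J l <-> lsat I (app_sub s l).
Proof.
  intros Hs; destruct l as [x | x | |]; simpl; try tauto.
  - apply Hs.
  - rewrite lsat_compl, <- (Hs x). destruct (J x); split; congruence.
Qed.

Lemma csat_reduct I s J c :
  comp_asg I s J -> csat J c <-> csat I (reduct c s).
Proof.
  intros Hs; destruct c as [ls | ls]; simpl; split.
  - intros [l [Hl Hsat]].
    exists (app_sub s l); split; [apply in_map | apply (lsat_app_sub _ Hs)]; auto.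
  - intros [l' [Hl' Hsat]]. apply in_map_iff in Hl' as [l [<- Hl]].
    exists l; split; [| apply (lsat_app_sub _ Hs)]; auto.
  - intros H l' Hl'. apply in_map_iff in Hl' as [l [<- Hl]].
    apply (lsat_app_sub _ Hs); auto.
  - intros H l Hl. apply (lsat_app_sub _ Hs), H, in_map; auto.
Qed.

Lemma UP_sound I S l : models I S -> UP S l -> lsat I l.
Proof.
  intros HS Hup; induction Hup as [| ls l Hc Hl | pre l post Hc _ IH].
  - exact Logic.I.
  - exact (HS _ Hc l Hl).
  - destruct (HS _ Hc) as [m [Hm Hsat]].
    apply in_app_or in Hm as [Hm | [-> | Hm]]; auto;
      exfalso; refine (proj1 (lsat_compl I m) (IH m _) Hsat);
      apply in_or_app; auto.
Qed.

Lemma conflict_unsat I S : models I S -> ~ conflict S.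
Proof.
  intros HS [Hbot | [[x [Hpos Hneg]] | [ls [Hc Hall]]]].
  - exact (UP_sound HS Hbot).
  - pose proof (UP_sound HS Hpos); pose proof (UP_sound HS Hneg).
    simpl in *; congruence.
  - destruct (HS _ Hc) as [l [Hl Hsat]].
    exact (proj1 (lsat_compl I l) (UP_sound HS (Hall l Hl)) Hsat).
Qed.

Lemma conflict_forces I S c :
  (forall d, S d -> csat I d \/ d = neg c) -> conflict S -> csat I c.
Proof.
  intros HS Hconf. apply NNPP; intro Hc.
  apply (conflict_unsat (I := I) (S := S)); auto.
  intros d Hd; destruct (HS d Hd) as [| ->]; auto.
  apply csat_neg; auto.
Qed.

Lemma psem_app e1 e2 I J :
  psem (e1 ++ e2) I J -> exists K, psem e1 I K /\ psem e2 K J.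
Proof.
  revert I; induction e1 as [| it e1 IH]; intros I H; simpl in H.
  - exists I; split; auto. now apply psem_nil.
  - inversion H as [| ? ? ? K ? Hit He]; subst.
    destruct (IH _ He) as [K' [H1 H2]].
    exists K'; split; auto. eapply psem_cons; eauto.
Qed.

Lemma psem_nil_inv I J : psem [] I J -> J = I.
Proof.
  intros H; inversion H as [? ? Heq |]; subst.
  now apply functional_extensionality.
Qed.

Lemma psem_guarded_sub_inv T s I J :
  psem [IIf T [ISub s] []] I J ->
  (csat I T /\ comp_asg I s J) \/ (~ csat I T /\ J = I).
Proof.
  intros H; inversion H as [| ? ? ? K ? Hit Hnil]; subst.
  apply psem_nil_inv in Hnil; subst.
  inversion Hit as [| | | | ? ? ? ? ? HT Hsub | ? ? ? ? ? HT Hid]; subst.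
  - left; split; auto.
    inversion Hsub as [| ? ? ? K' ? Hs Hnil]; subst.
    apply psem_nil_inv in Hnil; subst.
    now inversion Hs.
  - right; split; auto. exact (psem_nil_inv Hid).
Qed.

Lemma guarded_sub_sound I J S C s (T : cset) :
  models I S ->
  psem [IIf (neg (Clause C)) [ISub s] []] I J ->
  (forall D, T D -> S D \/ D = Clause C) ->
  (forall D, T D -> csat I (neg (Clause C)) -> csat I (reduct D s)) ->
  models J T.
Proof.
  intros HS Hguard HT Hred D HD.
  destruct (psem_guarded_sub_inv Hguard) as [[HnC Hs] | [HnC ->]].
  - apply (csat_reduct _ Hs); auto.
  - destruct (HT D HD) as [| ->]; auto.
    apply NNPP; intro HC. apply HnC, csat_neg; auto.
Qed.

Lemma redundancy_forces I S C D s :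
  models I S -> csat I (neg (Clause C)) ->
  conflict (add (add S (neg (Clause C))) (neg (reduct D s))) ->
  csat I (reduct D s).
Proof.
  intros HS HnC; apply conflict_forces.
  intros d [[Hd | ->] | ->]; auto.
Qed.

Lemma acc_snoc F p i : acc F (p ++ [i]) = acc_step (acc F p) i.
Proof. unfold acc; rewrite fold_left_app; reflexivity. Qed.

Lemma ctx_snoc p i : ctx (p ++ [i]) = ctx_step (ctx p) i.
Proof. unfold ctx; rewrite fold_left_app; reflexivity. Qed.

Lemma derivation_models F p I J :
  derivation F p -> models I (of_list F) -> psem (ctx p) I J ->
  models J (acc F p).
Proof.
  intros Hder HF; revert J.
  induction Hder as [| p C _ IH | p C _ IH Hrup | p C s _ IH _ [Hunit Hsr]
                     | p C s G _ IH _ Hwsr];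
    intros J Hrun; try rewrite ctx_snoc in Hrun; try rewrite acc_snoc;
    simpl in *.
  - now rewrite (psem_nil_inv Hrun).
  - intros D [HD _]; exact (IH J Hrun D HD).
  - apply models_add; auto.
    apply conflict_forces with (S := add (acc F p) (neg (Clause C))); auto.
    intros d [Hd | ->]; auto. left; exact (IH J Hrun d Hd).
  - apply psem_app in Hrun as [K [HK Hguard]].
    apply (guarded_sub_sound (IH K HK) Hguard); auto.
    intros D [HD | ->] HnC.
    + exact (redundancy_forces (IH K HK) HnC (Hsr D HD)).
    + apply conflict_forces with (S := single (neg (reduct (Clause C) s))); auto.
  - apply psem_app in Hrun as [K [HK Hguard]].
    apply (guarded_sub_sound (IH K HK) Hguard).
    + intros D [[HD _] | ->]; auto.
    + intros D HD HnC. exact (redundancy_forces (IH K HK) HnC (Hwsr D HD)).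
Qed.

Theorem mainTheorem3 (F : list constr) (p : list instr) :
  derivation F p -> dyn_entails (static F) (dynof (ctx p) (acc F p)).
Proof.
  intros Hder I HF e D [-> HD] J Hrun.
  apply (derivation_models Hder (I := I)); auto.
  intros C HC. apply (HF [] C (conj eq_refl HC)). now apply psem_nil.
Qed.
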